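(* Let $G$ be an abelian Hausdorff topological group and let $A$ be an infinite absolutely Cauchy summable subset of $G$ such that the cyclic subgroup $\langle a\rangle$ is discrete (in the subspace topology) for every $a\in A$. Then $A$ contains an infinite topologically independent subset.
   Context: $A\subseteq G$ is absolutely Cauchy summable if for every neighbourhood $U$ of $0$ there is a finite $F\subseteq A$ such that the subgroup $\langle A\setminus F\rangle$ generated by $A\setminus F$ is contained in $U$. A subset $B\subseteq G$ is topologically independent if $0\notin B$ and for every neighbourhood $W$ of $0$ there is a neighbourhood $U$ of $0$ such that for every finite $F\subseteq B$ and all integers $\{z_a:a\in F\}$, $\sum_{a\in F}z_aa\in U$ implies $z_aa\in W$ for all $a\in F$. *)

From HB Require Import structures.
From mathcomp Require Import all_boot all_order all_algebra.
From mathcomp Require Import all_classical all_reals all_analysis.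
Set Implicit Arguments. Unset Strict Implicit. Unset Printing Implicit Defensive.
Import Order.TTheory GRing.Theory Num.Theory.
Local Open Scope classical_set_scope.
Local Open Scope ring_scope.

(* Abelian topological groups are MathComp-Analysis' [topologicalZmodType]
   (zmodType + topology with continuous addition and opposite). *)

Definition gen_subgroup (G : zmodType) (S : set G) : set G :=
  [set x | exists (s : seq G) (z : G -> int),
      (forall a, a \in s -> S a) /\ x = \sum_(a <- s) a *~ z a].

Definition cyclic_subgroup (G : zmodType) (a : G) : set G :=
  [set x | exists n : int, x = a *~ n].

Definition discrete_subset (G : topologicalType) (C : set G) : Prop :=
  forall x, C x -> exists U, nbhs x U /\ U `&` C = [set x].

Definition abs_cauchy_summable (G : topologicalZmodType) (A : set G) : Prop :=
  forall U : set G, nbhs (0 : G) U ->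
    exists F : set G, [/\ finite_set F, F `<=` A &
      gen_subgroup (A `\` F) `<=` U].

(* Finite subsets F of B are represented by duplicate-free sequences. *)
Definition top_independent (G : topologicalZmodType) (B : set G) : Prop :=
  ~ B 0 /\
  forall W : set G, nbhs (0 : G) W ->
    exists U : set G, nbhs (0 : G) U /\
      forall (F : seq G) (z : G -> int),
        uniq F -> (forall a, a \in F -> B a) ->
        U (\sum_(a <- F) a *~ z a) ->
        forall a, a \in F -> W (a *~ z a).

From HB Require Import structures.
From mathcomp Require Import all_boot all_order all_algebra.
From mathcomp Require Import all_classical all_reals all_analysis.
Set Implicit Arguments. Unset Strict Implicit. Unset Printing Implicit Defensive.
Import Order.TTheory GRing.Theory Num.Theory.
Local Open Scope classical_set_scope.
Local Open Scope ring_scope.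

(* Choose recursively points a_n of A, neighbourhoods U_n of 0 decreasing in
   n, and finite sets F_n containing a_n, increasing in n, such that <a_n>
   meets U_n - U_n only in 0 (discreteness of <a_n>), <A \ F_n> lies in U_n
   (absolute Cauchy summability) and a_(n+1) lies outside F_n. If a finite
   combination of the a_n lies in U_N, then, by induction on j <= N, its term
   in a_j vanishes: the tail of indices above j lies in <A \ F_j>, hence in
   U_j, so the term lies in <a_j> and in U_j - U_j. Given W, summability gives
   a finite F with <A \ F> in W; taking N beyond the indices of F, every term
   either vanishes or lies in <A \ F>. *)

Lemma finite_nat_bounded (S : set nat) :
  finite_set S -> exists N, forall n, S n -> (n < N)%N.
Proof.
move=> /finite_seqP[s ->]; exists (\max_(n <- s) n).+1 => n sn.
by rewrite ltnS; apply: leq_bigmax_seq.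
Qed.

Lemma gen_subgroupS (G : zmodType) (S T : set G) :
  S `<=` T -> gen_subgroup S `<=` gen_subgroup T.
Proof. by move=> ST x [s [z [sS ->]]]; exists s, z; split=> // a /sS/ST. Qed.

Lemma gen_subgroup_mulz (G : zmodType) (S : set G) a k :
  S a -> gen_subgroup S (a *~ k).
Proof.
move=> Sa; exists [:: a], (fun=> k); rewrite big_seq1; split=> // b.
by rewrite inE => /eqP ->.
Qed.

Definition inj_mod {G : zmodType} (C U : set G) :=
  forall x y, U x -> U y -> C (x - y) -> x = y.

Section SubgroupNbhs.
Variable G : topologicalZmodType.

Lemma nbhs0_subr (V : set G) : nbhs 0 V ->
  exists2 U : set G, nbhs 0 U & forall x y, U x -> U y -> V (x - y).
Proof.
move=> V0; have := @sub_continuous G (0, 0) V.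
rewrite /= subr0 => /(_ V0) -[[P Q] /= [P0 Q0] PQ].
exists (P `&` Q); first exact: filterI.
by move=> x y [Px _] [_ Qy]; apply: (PQ (x, y)).
Qed.

Lemma discrete_inj_mod (C P : set G) : discrete_subset C -> C 0 -> nbhs 0 P ->
  exists U, [/\ nbhs 0 U, U `<=` P & inj_mod C U].
Proof.
move=> Cdisc C0 P0; have [V [V0 VC]] := Cdisc 0 C0.
have [U U0 UU] := nbhs0_subr (filterI V0 P0).
exists U; split=> // [x Ux|x y Ux Uy Cxy].
  by have [_] := UU x 0 Ux (nbhs_singleton U0); rewrite subr0.
have [Vxy _] := UU x y Ux Uy.
have : (V `&` C) (x - y) by [].
by rewrite VC => /subr0_eq.
Qed.

End SubgroupNbhs.

Section Construction.
Variables (G : topologicalZmodType) (A : set G).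
Hypotheses (A_infinite : infinite_set A) (A_acs : abs_cauchy_summable A).
Hypothesis A_discrete : forall a, A a -> discrete_subset (cyclic_subgroup a).

Record stage := Stage {
  pt : G;
  nb : set G;
  excl : set G;
  ptA : A pt;
  pt_neq0 : pt != 0;
  nbhs_nb : nbhs 0 nb;
  inj_mod_nb : inj_mod (cyclic_subgroup pt) nb;
  finite_excl : finite_set excl;
  excl_pt : excl pt;
  gen_excl : gen_subgroup (A `\` excl) `<=` nb }.

Definition refines (s t : stage) :=
  [/\ ~ excl s (pt t), excl s `<=` excl t & nb t `<=` nb s].

Lemma stage_avoiding (E P : set G) : finite_set E -> nbhs 0 P ->
  exists t : stage, [/\ ~ E (pt t), E `<=` excl t & nb t `<=` P].
Proof.
move=> Efin P0.
have E0fin : finite_set (E `|` [set 0]).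
  by rewrite finite_setU; split=> //; exact: finite_set1.
have /infinite_setN0[a [Aa /not_orP[Ea /eqP a0]]] := infinite_setD A_infinite E0fin.
have [U [U0 UP Uinj]] :=
  discrete_inj_mod (A_discrete Aa) (ex_intro _ 0 (esym (mulr0z a))) P0.
have [F [Ffin _ FU]] := A_acs U0.
have Xfin : finite_set (F `|` E `|` [set a]).
  by rewrite !finite_setU; do !split=> //; exact: finite_set1.
have XU : gen_subgroup (A `\` (F `|` E `|` [set a])) `<=` U.
  apply: subset_trans FU; apply: gen_subgroupS => x [Ax Xx].
  by split=> // Fx; apply: Xx; do 2 left.
by exists (Stage Aa a0 U0 Uinj Xfin (or_intror erefl) XU); split=> // x Ex; left; right.
Qed.

Lemma refining_chain : exists s : nat -> stage, forall n, refines (s n) (s n.+1).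
Proof.
have [s0 _] := stage_avoiding (@finite_set0 G) filterT.
have [s [_ s_ref]] := @dependent_choice _ refines
  (fun s => cid (stage_avoiding (finite_excl s) (nbhs_nb s))) s0.
by exists s.
Qed.

Section Chain.
Variable s : nat -> stage.
Hypothesis s_refines : forall n, refines (s n) (s n.+1).

Let a n := pt (s n).

Lemma nb_nonincreasing k j : (k <= j)%N -> nb (s j) `<=` nb (s k).
Proof.
apply: (@homo_leq _ (nb \o s) (fun U V => V `<=` U)).
- exact: subset_refl.
- by move=> V U W VU WV; apply: subset_trans WV VU.
- by move=> n; case: (s_refines n).
Qed.

Lemma excl_nondecreasing k j : (k <= j)%N -> excl (s k) `<=` excl (s j).
Proof.
apply: (@homo_leq _ (excl \o s) subset).
- exact: subset_refl.
- by move=> V U W UV VW; apply: subset_trans UV VW.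
- by move=> n; case: (s_refines n).
Qed.

Lemma pt_notin_excl k j : (k < j)%N -> ~ excl (s k) (a j).
Proof.
case: j => // j; rewrite ltnS => kj /(excl_nondecreasing kj).
by case: (s_refines j).
Qed.

Lemma pt_inj : injective a.
Proof.
suff lt_neq k j : (k < j)%N -> a k != a j.
  move=> k j akj; case: (ltngtP k j) => // [kj|jk].
  - by move: (lt_neq _ _ kj); rewrite akj eqxx.
  - by move: (lt_neq _ _ jk); rewrite akj eqxx.
move=> /pt_notin_excl kj; apply/eqP => akj; apply: kj; rewrite -akj.
exact: excl_pt.
Qed.

Lemma chain_coef_vanish (L : seq G) (z : G -> int) M :
  uniq L -> (forall x, x \in L -> range a x) ->
  nb (s M) (\sum_(x <- L) x *~ z x) ->
  forall j, (j <= M)%N -> a j \in L -> a j *~ z (a j) = 0.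
Proof.
move=> Luniq La LM; elim/ltn_ind => j IH jM ajL.
pose P x := `[< exists2 i, (i < j)%N & x = a i >].
pose R := \sum_(x <- L | (x != a j) && ~~ P x) x *~ z x.
have sum_split : \sum_(x <- L) x *~ z x = a j *~ z (a j) + R.
  rewrite (bigD1_seq (a j)) //= (bigID P) /= big1_seq ?add0r //.
  move=> x /andP[/andP[_ /asboolP[i ij ->]] xL].
  exact: IH ij (leq_trans (ltnW ij) jM) xL.
have R_nb : nb (s j) R.
  apply: gen_excl; exists [seq x <- L | (x != a j) && ~~ P x], z.
  split; last by rewrite big_filter.
  move=> x; rewrite mem_filter => /andP[/andP[xj Px] /La[n _ xn]].
  rewrite -xn in xj Px *; split; first exact: ptA.
  case: (ltngtP n j) => [nj|jn|nj]; last by rewrite nj eqxx in xj.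
    by move/asboolPn: Px; case; exists n.
  exact: pt_notin_excl.
have := inj_mod_nb (nb_nonincreasing jM LM) R_nb.
rewrite sum_split addrK => /(_ (ex_intro _ _ erefl)).
by move=> /(congr1 (fun x => x - R)); rewrite addrK subrr.
Qed.

Lemma chain_infinite : infinite_set (range a).
Proof.
move=> /(finite_preimage (in2W pt_inj)); rewrite preimage_range.
exact: infinite_nat.
Qed.

Lemma chain_top_independent : top_independent (range a).
Proof.
split; first by move=> [n _ /eqP]; apply/negP/pt_neq0.
move=> W W0; have [F0 [F0fin _ F0W]] := A_acs W0.
have [N F0N] := finite_nat_bounded (finite_preimage (in2W pt_inj) F0fin).
exists (nb (s N)); split=> [|L z Luniq La LN x xL]; first exact: nbhs_nb.
have [n _ an] := La x xL; subst x.
have [F0an|F0an] := pselect (F0 (a n)).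
  rewrite (chain_coef_vanish Luniq La LN (ltnW (F0N n F0an)) xL).
  exact: nbhs_singleton.
by apply/F0W/gen_subgroup_mulz; split=> //; apply: ptA.
Qed.

End Chain.
End Construction.

Theorem theorem5p4 (G : topologicalZmodType) (A : set G) :
  hausdorff_space G ->
  infinite_set A ->
  abs_cauchy_summable A ->
  (forall a, A a -> discrete_subset (cyclic_subgroup a)) ->
  exists B : set G, [/\ B `<=` A, infinite_set B & top_independent B].
Proof.
move=> _ A_infinite A_acs A_discrete.
have [s s_refines] := refining_chain A_infinite A_acs A_discrete.
exists (range (fun n => pt (s n))); split.
- by move=> _ [n _ <-]; apply: ptA.
- exact: chain_infinite s_refines.
- exact (chain_top_independent A_acs s_refines).
Qed.
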